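(* Let $r\in(0,1)$ and let $X$ be the geometric armadillo tail with parameter $r$. Then there exists a closed saddle connection on $X$ in the direction of slope $\frac{1}{2-r}$ that intersects every square torus $\square_k$, $k\ge1$.
   Context: Set $l_k=r^{k-1}$, $s_k=l_1+\dots+l_k$ ($s_0=0$), and $\square_k=[s_{k-1},s_k]\times[0,l_k]\subset\mathbb{R}^2$. The geometric armadillo tail with parameter $r$ is obtained from $P=\bigcup_k\square_k$ by gluing the top edge of each $\square_k$ to its bottom edge by vertical translation, and for each $k\ge1$ gluing $\{s_k\}\times[l_{k+1},l_k]$ (the part of the right edge of $\square_k$ not shared with $\square_{k+1}$) by horizontal translation to $\{0\}\times[l_{k+1},l_k]$; then taking the metric completion, in which all vertices become a single wild singularity. With these identifications each $\square_k$ is a square torus (the surface is an infinite connected sum of them). Slopes are measured in the polygonal representation $P$. A saddle connection is a closed straight-line segment starting and ending at the singularity with no singular point in its interior. *)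

From Stdlib Require Import Reals ZArith.
Open Scope R_scope.

(** Geometric armadillo tail with parameter r.
    Squares are indexed by k >= 1 (nat). *)

Definition len (r : R) (k : nat) : R := r ^ (k - 1).

Fixpoint spos (r : R) (k : nat) : R :=
  match k with
  | O => 0
  | S k' => spos r k' + len r (S k')
  end.

Definition in_square (r : R) (k : nat) (p : R * R) : Prop :=
  (1 <= k)%nat /\
  spos r (k - 1) <= fst p <= spos r k /\ 0 <= snd p <= len r k.

Definition is_corner (r : R) (k : nat) (p : R * R) : Prop :=
  (1 <= k)%nat /\
  (fst p = spos r (k - 1) \/ fst p = spos r k) /\
  (snd p = 0 \/ snd p = len r k).

(* points of P which become the (single, wild) singularity: all vertices
   of the squares, and the points (0, l_k) of the left edge of square 1,
   which are glued to the vertices (s_{k-1}, l_k). *)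
Definition singular_pt (r : R) (p : R * R) : Prop :=
  (exists k, is_corner r k p) \/
  (exists k, (1 <= k)%nat /\ p = (0, len r k)).

(* For a flow direction with positive components: points on the edges
   through which the flow enters (left/bottom) or exits (right/top) the
   square k. *)
Definition entry_pt (r : R) (k : nat) (p : R * R) : Prop :=
  in_square r k p /\ (fst p = spos r (k - 1) \/ snd p = 0).

Definition exit_pt (r : R) (k : nat) (p : R * R) : Prop :=
  in_square r k p /\ (fst p = spos r k \/ snd p = len r k).

(* The identifications of the surface, read in the direction of a flow
   with positive components: the exit point p of square k is the same
   point of the surface as the entry point q of square m. *)
Definition glue (r : R) (k : nat) (p : R * R) (m : nat) (q : R * R) : Prop :=
  (snd p = len r k /\ m = k /\ q = (fst p, 0)) \/
  (fst p = spos r k /\ len r (S k) <= snd p <= len r k /\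
     m = 1%nat /\ q = (0, snd p)) \/
  (* the shared edge {s_k} x [0, l_{k+1}] of squares k and k+1 *)
  (fst p = spos r k /\ 0 <= snd p <= len r (S k) /\ m = S k /\ q = p).

Definition dir (sigma : R) : R * R := (1, sigma).

Definition pt_move (p : R * R) (s : R) (v : R * R) : R * R :=
  (fst p + s * fst v, snd p + s * snd v).

Fixpoint sumZ (f : Z -> R) (m : Z) (n : nat) : R :=
  match n with
  | O => 0
  | S n' => f m + sumZ f (m + 1)%Z n'
  end.

(** A saddle connection in the direction of slope sigma > 0, oriented along
    (1, sigma), described by its successive maximal pieces in the squares.
    The pieces are indexed by a nonempty interval J of integers (finite,
    or infinite on one or both sides).  The total length is finite (an
    end with infinitely many pieces then converges, in the metric
    completion, to the wild singularity). *)
Definition saddle_connection (r sigma : R) (J : Z -> Prop) (sq : Z -> nat)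
    (a : Z -> R * R) (t : Z -> R) : Prop :=
  let v := dir sigma in
  (exists i, J i) /\
  (forall i j k, J i -> J k -> (i <= j <= k)%Z -> J j) /\
  (forall i, J i ->
     0 < t i /\
     (forall s, 0 <= s <= t i -> in_square r (sq i) (pt_move (a i) s v)) /\
     entry_pt r (sq i) (a i) /\
     exit_pt r (sq i) (pt_move (a i) (t i) v)) /\
  (forall i, J i -> J (i + 1)%Z ->
     glue r (sq i) (pt_move (a i) (t i) v) (sq (i + 1)%Z) (a (i + 1)%Z)) /\
  (forall i s, J i -> 0 <= s <= t i -> singular_pt r (pt_move (a i) s v) ->
     (s = 0 /\ ~ J (i - 1)%Z) \/ (s = t i /\ ~ J (i + 1)%Z)) /\
  (forall i, J i -> ~ J (i - 1)%Z -> singular_pt r (a i)) /\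
  (forall i, J i -> ~ J (i + 1)%Z -> singular_pt r (pt_move (a i) (t i) v)) /\
  (exists B, forall m n,
     (forall j, (m <= j < m + Z.of_nat n)%Z -> J j) -> sumZ t m n <= B).

From Stdlib Require Import Reals ZArith Lia Lra Psatz.
Open Scope R_scope.

(* Follow the line of slope sigma = 1/(2-r) out of the vertex (0,0).  It leaves
   square 1 through its right edge at height sigma, which lies in [l_2, l_1],
   so it re-enters square 1 at (0, sigma).  From then on it enters square k+1
   at (s_k, sigma l_{k+1}); because sigma (2-r) = 1 it reaches the top edge
   after a horizontal run (1-r) l_{k+1}, reappears on the bottom edge, and
   leaves through the right edge at height sigma l_{k+2} < l_{k+2}, i.e.
   through the edge shared with square k+2, at the same relative position as
   before.  Hence the ray visits every square and has length 1 + sum_k r^k,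
   so it converges to the wild singularity.  The grid points it meets after
   the start all have height sigma r^m, which is neither 0 nor a power of r
   since r < sigma < 1, so none of them is singular. *)

Lemma len_S r k : len r (S k) = r ^ k.
Proof. unfold len; simpl; now rewrite Nat.sub_0_r. Qed.

Lemma spos_S r k : spos r (S k) = spos r k + r ^ k.
Proof. now rewrite <- len_S. Qed.

Lemma sumZ_telescope (t T : nat -> R) (m : Z) (n : nat) :
  (forall i, t i = T i - T (S i)) -> (0 <= m)%Z ->
  sumZ (fun i => t (Z.to_nat i)) m n = T (Z.to_nat m) - T (Z.to_nat m + n)%nat.
Proof.
  intros Ht; revert m; induction n as [|n IH]; intros m Hm; cbn [sumZ].
  - rewrite Nat.add_0_r; ring.
  - rewrite IH, Ht by lia.
    replace (Z.to_nat (m + 1)) with (S (Z.to_nat m)) by lia.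
    replace (Z.to_nat m + S n)%nat with (S (Z.to_nat m) + n)%nat by lia.
    ring.
Qed.

Definition square_crossing (r sigma : R) (k : nat) (p : R * R) (t : R) : Prop :=
  0 < t /\
  (forall s, 0 <= s <= t -> in_square r k (pt_move p s (dir sigma))) /\
  entry_pt r k p /\
  exit_pt r k (pt_move p t (dir sigma)).

Section HalfInfiniteSaddleConnection.

Variables (r sigma : R) (sq : nat -> nat) (a : nat -> R * R) (t T : nat -> R).

Hypothesis pieces_cross : forall n, square_crossing r sigma (sq n) (a n) (t n).
Hypothesis pieces_glue :
  forall n, glue r (sq n) (pt_move (a n) (t n) (dir sigma)) (sq (S n)) (a (S n)).
Hypothesis start_singular : singular_pt r (a O).
Hypothesis regular_after_start : forall n s, 0 <= s <= t n ->
  singular_pt r (pt_move (a n) s (dir sigma)) -> n = O /\ s = 0.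
Hypothesis time_telescopes : forall n, t n = T n - T (S n).
Hypothesis tail_nonneg : forall n, 0 <= T n.

Lemma saddle_connection_of_pieces :
  saddle_connection r sigma (fun i => (0 <= i)%Z) (fun i => sq (Z.to_nat i))
    (fun i => a (Z.to_nat i)) (fun i => t (Z.to_nat i)).
Proof.
  unfold saddle_connection; cbv zeta.
  split; [exists 0%Z; lia|].
  split; [intros; lia|].
  split; [intros i _; apply pieces_cross|].
  split.
  { intros i Hi _. replace (Z.to_nat (i + 1)) with (S (Z.to_nat i)) by lia.
    apply pieces_glue. }
  split.
  { intros i s Hi Hs Hsing.
    destruct (regular_after_start _ _ Hs Hsing) as [Hstart ->].
    left; split; [reflexivity | lia]. }
  split.
  { intros i Hi Hprev. now replace (Z.to_nat i) with O by lia. }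
  split; [intros i Hi Hnext; lia|].
  exists (T O). intros m [|n] Hwindow; [apply tail_nonneg|].
  assert (Hm : (0 <= m)%Z) by (apply Hwindow; lia).
  rewrite (sumZ_telescope t T m (S n) time_telescopes Hm).
  assert (Htail_le_start : forall k, T k <= T O).
  { induction k as [|k IH]; [lra|].
    pose proof (time_telescopes k). destruct (pieces_cross k). lra. }
  pose proof (Htail_le_start (Z.to_nat m)).
  pose proof (tail_nonneg (Z.to_nat m + S n)).
  lra.
Qed.

End HalfInfiniteSaddleConnection.

Lemma singular_pt_on_grid r p : singular_pt r p ->
  (exists k, fst p = spos r k) /\ (snd p = 0 \/ exists j, snd p = r ^ j).
Proof.
  intros [[k (_ & Hx & Hy)] | [k [_ ->]]].
  - split; [destruct Hx; eauto|].
    destruct Hy as [Hy|Hy]; [now left | right; eauto].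
  - split; [now exists O | right; now exists (k - 1)%nat].
Qed.

Section Squares.

Variable r : R.
Hypothesis r_pos : 0 < r.

Lemma spos_le_mono j k : (j <= k)%nat -> spos r j <= spos r k.
Proof.
  induction 1 as [|k _ IH]; [lra|].
  rewrite spos_S. pose proof (pow_lt r k r_pos). lra.
Qed.

Lemma not_singular_inside_column k x y :
  spos r k < x < spos r (S k) -> ~ singular_pt r (x, y).
Proof.
  intros Hx Hsing. destruct (singular_pt_on_grid _ _ Hsing) as [[j Hj] _].
  cbn [fst] in Hj; subst x.
  destruct (le_lt_dec j k) as [Hjk|Hkj].
  - pose proof (spos_le_mono _ _ Hjk); lra.
  - pose proof (spos_le_mono _ _ Hkj); lra.
Qed.

Lemma scaled_pow_not_pow c m j : r < c < 1 -> c * r ^ m <> r ^ j.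
Proof.
  intros Hc Heq.
  assert (Hpow_le_1 : forall d, r ^ d <= 1).
  { intros d. rewrite <- (pow1 d). apply pow_incr. lra. }
  destruct (le_lt_dec j m) as [Hjm|Hmj].
  - replace m with (j + (m - j))%nat in Heq by lia.
    rewrite pow_add in Heq.
    assert (Hone : c * r ^ (m - j) = 1).
    { apply (Rmult_eq_reg_l (r ^ j)); [|pose proof (pow_lt r j r_pos); lra].
      transitivity (c * (r ^ j * r ^ (m - j))); [ring | rewrite Heq; ring]. }
    specialize (Hpow_le_1 (m - j)%nat). nra.
  - replace j with (m + S (j - m - 1))%nat in Heq by lia.
    rewrite pow_add in Heq. cbn [pow] in Heq.
    assert (Hc_pow : c = r * r ^ (j - m - 1)).
    { apply (Rmult_eq_reg_l (r ^ m)); [|pose proof (pow_lt r m r_pos); lra].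
      transitivity (c * r ^ m); [ring | rewrite Heq; ring]. }
    specialize (Hpow_le_1 (j - m - 1)%nat). nra.
Qed.

Lemma not_singular_at_scaled_pow c m x : r < c < 1 -> ~ singular_pt r (x, c * r ^ m).
Proof.
  intros Hc Hsing. pose proof (pow_lt r m r_pos).
  destruct (singular_pt_on_grid _ _ Hsing) as [_ [Hy | [j Hy]]]; cbn [snd] in Hy.
  - nra.
  - exact (scaled_pow_not_pow c m j Hc Hy).
Qed.

End Squares.

Lemma in_square_S r k x y :
  spos r k <= x <= spos r (S k) -> 0 <= y <= r ^ k -> in_square r (S k) (x, y).
Proof.
  intros Hx Hy. unfold in_square; cbn [fst snd].
  rewrite len_S, Nat.sub_succ, Nat.sub_0_r. repeat split; lia || lra.
Qed.

Lemma entry_pt_S r k x y :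
  in_square r (S k) (x, y) -> x = spos r k \/ y = 0 -> entry_pt r (S k) (x, y).
Proof. intros. split; [assumption|]. now rewrite Nat.sub_succ, Nat.sub_0_r. Qed.

Lemma exit_pt_S r k x y :
  in_square r (S k) (x, y) -> x = spos r (S k) \/ y = r ^ k -> exit_pt r (S k) (x, y).
Proof. intros. split; [assumption|]. now rewrite len_S. Qed.

Lemma piece_index_cases (P : nat -> Prop) :
  P O -> (forall k, P (S (2 * k))) -> (forall k, P (S (2 * k + 1))) -> forall n, P n.
Proof.
  intros H0 Heven Hodd [|m]; [assumption|].
  destruct (Nat.Even_or_Odd m) as [[k ->] | [k ->]]; auto.
Qed.

#[local] Hint Rewrite Nat.div2_double Nat.div2_odd' Nat.even_even Nat.even_odd : parity.

Section ArmadilloConnection.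

Variables r sigma : R.
Hypothesis hr : 0 < r < 1.
Hypothesis sigma_inv : sigma * (2 - r) = 1.

Lemma sigma_between : r < sigma < 1.
Proof. split; nra. Qed.

(* Piece 0 crosses square 1 from the origin; pieces 2k+1 (from the left edge
   to the top edge) and 2k+2 (from the bottom edge to the right edge) cross
   square k+1. *)
Definition conn_sq (n : nat) : nat :=
  match n with O => 1%nat | S m => S (Nat.div2 m) end.

Definition conn_start (n : nat) : R * R :=
  match n with
  | O => (0, 0)
  | S m => let k := Nat.div2 m in
      if Nat.even m then (spos r k, sigma * r ^ k)
      else (spos r k + (1 - r) * r ^ k, 0)
  end.

Definition conn_time (n : nat) : R :=
  match n with
  | O => 1
  | S m => let k := Nat.div2 m in
      if Nat.even m then (1 - r) * r ^ k else r ^ S k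
  end.

Definition conn_tail (n : nat) : R :=
  match n with
  | O => 1 + / (1 - r)
  | S m => let k := Nat.div2 m in
      if Nat.even m then r ^ k / (1 - r) else r ^ S k + r ^ S k / (1 - r)
  end.

Lemma conn_time_telescopes n : conn_time n = conn_tail n - conn_tail (S n).
Proof.
  induction n as [|k|k] using piece_index_cases; unfold conn_time, conn_tail.
  - simpl. field. lra.
  - replace (S (2 * k)) with (2 * k + 1)%nat by lia.
    autorewrite with parity. simpl. field. lra.
  - replace (S (2 * k + 1)) with (2 * S k)%nat by lia.
    autorewrite with parity. simpl. field. lra.
Qed.

Lemma conn_tail_nonneg n : 0 <= conn_tail n.
Proof.
  assert (0 < / (1 - r)) by (apply Rinv_0_lt_compat; lra).
  induction n as [|k|k] using piece_index_cases; unfold conn_tail, Rdiv;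
    autorewrite with parity; [lra | ..];
    pose proof (pow_lt r k (proj1 hr)); pose proof (pow_lt r (S k) (proj1 hr)); nra.
Qed.

Lemma conn_crossing n : square_crossing r sigma (conn_sq n) (conn_start n) (conn_time n).
Proof.
  pose proof sigma_between.
  induction n as [|k|k] using piece_index_cases;
    unfold square_crossing, conn_sq, conn_start, conn_time, dir, pt_move;
    autorewrite with parity; cbn [fst snd].
  - pose proof (in_square_S r O) as Hin. rewrite spos_S in Hin. cbn [spos pow] in Hin.
    split; [lra | split; [|split]].
    + intros s Hs. apply Hin; nra.
    + apply entry_pt_S; [apply Hin|]; lra.
    + apply exit_pt_S; [apply Hin; lra | left; cbn; lra].
  - pose proof (pow_lt r k (proj1 hr)).
    assert (Hscale : sigma * (2 - r) * r ^ k = r ^ k) by (rewrite sigma_inv; ring).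
    split; [nra | split; [|split]].
    + intros s Hs. apply in_square_S; rewrite ?spos_S; nra.
    + apply entry_pt_S; [apply in_square_S; rewrite ?spos_S; nra | now left].
    + apply exit_pt_S; [apply in_square_S; rewrite ?spos_S; nra | right; nra].
  - pose proof (pow_lt r k (proj1 hr)).
    assert (Hscale : sigma * (2 - r) * r ^ k = r ^ k) by (rewrite sigma_inv; ring).
    cbn [pow].
    split; [nra | split; [|split]].
    + intros s Hs. apply in_square_S; rewrite ?spos_S; nra.
    + apply entry_pt_S; [apply in_square_S; rewrite ?spos_S; nra | now right].
    + apply exit_pt_S; [apply in_square_S; rewrite ?spos_S; nra | left; rewrite spos_S; ring].
Qed.

Lemma conn_glue n :
  glue r (conn_sq n) (pt_move (conn_start n) (conn_time n) (dir sigma))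
    (conn_sq (S n)) (conn_start (S n)).
Proof.
  pose proof sigma_between.
  induction n as [|k|k] using piece_index_cases.
  - right; left. cbn. unfold len; cbn.
    split; [ring | split; [split; lra | split; [reflexivity | f_equal; ring]]].
  - replace (S (S (2 * k))) with (S (2 * k + 1)) by lia.
    unfold conn_sq, conn_start, conn_time, dir, pt_move; autorewrite with parity.
    left; cbn [fst snd]. rewrite len_S.
    assert (Hscale : sigma * (2 - r) * r ^ k = r ^ k) by (rewrite sigma_inv; ring).
    split; [nra | split; [reflexivity | f_equal; ring]].
  - replace (S (S (2 * k + 1))) with (S (2 * S k)) by lia.
    unfold conn_sq, conn_start, conn_time, dir, pt_move; autorewrite with parity.
    right; right; cbn [fst snd]. rewrite !len_S, spos_S.
    pose proof (pow_lt r (S k) (proj1 hr)). cbn [pow] in *.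
    split; [ring | split; [split; nra | split; [reflexivity | f_equal; ring]]].
Qed.

Lemma conn_regular_after_start n s : 0 <= s <= conn_time n ->
  singular_pt r (pt_move (conn_start n) s (dir sigma)) -> n = O /\ s = 0.
Proof.
  pose proof sigma_between as Hsigma. assert (Hr : 0 < r) by lra.
  induction n as [|k|k] using piece_index_cases;
    unfold conn_start, conn_time, dir, pt_move; autorewrite with parity; cbn [fst snd];
    intros Hs Hsing.
  - destruct (Req_dec s 0) as [-> | Hs0]; [split; reflexivity | exfalso].
    destruct (Req_dec s 1) as [-> | Hs1]; revert Hsing.
    + replace (0 + 1 * sigma) with (sigma * r ^ 0) by (cbn; ring).
      apply not_singular_at_scaled_pow; assumption.
    + apply (not_singular_inside_column r Hr O). rewrite spos_S. cbn. lra.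
  - exfalso. pose proof (pow_lt r k Hr).
    destruct (Req_dec s 0) as [-> | Hs0]; revert Hsing.
    + replace (sigma * r ^ k + 0 * sigma) with (sigma * r ^ k) by ring.
      apply not_singular_at_scaled_pow; assumption.
    + apply (not_singular_inside_column r Hr k). rewrite spos_S. nra.
  - exfalso. pose proof (pow_lt r k Hr).
    destruct (Req_dec s (r ^ S k)) as [-> | Hs1]; revert Hsing.
    + replace (0 + r ^ S k * sigma) with (sigma * r ^ S k) by ring.
      apply not_singular_at_scaled_pow; assumption.
    + apply (not_singular_inside_column r Hr k). rewrite spos_S. cbn [pow] in *. nra.
Qed.

End ArmadilloConnection.

Lemma conn_sq_odd k : conn_sq (S (2 * k)) = S k.
Proof. cbn [conn_sq]. now rewrite Nat.div2_double. Qed.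

Theorem theorem2p1 (r : R) (hr : 0 < r < 1) :
  exists (J : Z -> Prop) (sq : Z -> nat) (a : Z -> R * R) (t : Z -> R),
    saddle_connection r (/ (2 - r)) J sq a t /\
    (forall k : nat, (1 <= k)%nat -> exists i, J i /\ sq i = k).
Proof.
  assert (sigma_inv : / (2 - r) * (2 - r) = 1) by (field; lra).
  exists (fun i => (0 <= i)%Z), (fun i => conn_sq (Z.to_nat i)),
    (fun i => conn_start r (/ (2 - r)) (Z.to_nat i)), (fun i => conn_time r (Z.to_nat i)).
  split.
  - apply saddle_connection_of_pieces with (T := conn_tail r).
    + exact (conn_crossing r _ hr sigma_inv).
    + exact (conn_glue r _ hr sigma_inv).
    + left. exists 1%nat. cbn. repeat split; auto.
    + exact (conn_regular_after_start r _ hr sigma_inv).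
    + exact (conn_time_telescopes r hr).
    + exact (conn_tail_nonneg r hr).
  - intros k Hk. exists (Z.of_nat (S (2 * (k - 1)))). split; [lia|].
    rewrite Nat2Z.id, conn_sq_odd. lia.
Qed.
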